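(* Let $K,T\subset\mathbb{R}^n$ be convex bodies and let $q=(q_1,\dots,q_m)$ be a closed $(K,T)$-Minkowski billiard trajectory with respect to the $K$-supporting hyperplanes $H_1,\dots,H_m$, with associated outer unit normal vectors $n_K(q_1),\dots,n_K(q_m)$ normal to $H_1,\dots,H_m$. Then $0\in\operatorname{conv}\{n_K(q_1),\dots,n_K(q_m)\}$. If moreover $T$ is smooth, then the convex cone $\widetilde U$ spanned by $n_K(q_1),\dots,n_K(q_m)$ is a linear subspace of $\mathbb{R}^n$ with $\dim\widetilde U\le m-1$.
   Context: A convex body is a compact convex set in $\mathbb{R}^n$ containing the origin in its interior; it is smooth if through each boundary point there is a unique supporting hyperplane. For a convex set $C$ and $z\in\partial C$, $N_C(z)=\{v:\langle v,y-z\rangle\le 0\ \forall y\in C\}$. A closed polygonal curve $(q_1,\dots,q_m)$, $m\ge2$, always satisfies $q_j\ne q_{j+1}$ and $q_j\notin[q_{j-1},q_{j+1}]$ (indices mod $m$). A closed polygonal curve $q$ with vertices on $\partial K$ is a closed $(K,T)$-Minkowski billiard trajectory with respect to the $K$-supporting hyperplanes $H_1,\dots,H_m$ through $q_1,\dots,q_m$ if there are $p_1,\dots,p_m\in\partial T$, outer unit normals $n_K(q_j)\in N_K(q_j)$ normal to $H_j$, and $\mu_j\ge 0$ with $q_{j+1}-q_j\in N_T(p_j)$ and $p_{j+1}-p_j=-\mu_{j+1}n_K(q_{j+1})$ for all $j$. *)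

From HB Require Import structures.
From mathcomp Require Import all_boot all_order all_algebra.
From mathcomp Require Import all_classical all_reals all_analysis.
Set Implicit Arguments. Unset Strict Implicit. Unset Printing Implicit Defensive.
Import Order.TTheory GRing.Theory Num.Theory.
Import numFieldNormedType.Exports.
Local Open Scope classical_set_scope.
Local Open Scope ring_scope.

Section Defs.
Variables (R : realType) (n : nat).
Local Notation vec := 'rV[R]_n.

Definition dotv (u v : vec) : R := \sum_(i < n) u 0 i * v 0 i.

Definition convex_set (C : set vec) : Prop :=
  forall x y (t : R), C x -> C y -> 0 <= t -> t <= 1 -> C ((1 - t) *: x + t *: y).

Definition convex_body (C : set vec) : Prop :=
  [/\ convex_set C, compact C & (interior C) 0].

Definition bd (C : set vec) : set vec := closure C `\` interior C.

Definition normal_cone (C : set vec) (z : vec) : set vec :=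
  [set v | forall y, C y -> dotv v (y - z) <= 0].

Definition supporting_hyperplane (C : set vec) (z : vec) (H : set vec) : Prop :=
  exists (a : vec) (c : R), [/\ a != 0, H = [set x | dotv a x = c], H z
                               & forall y, C y -> dotv a y <= c].

Definition smooth (C : set vec) : Prop :=
  forall z, bd C z -> forall H1 H2, supporting_hyperplane C z H1 ->
    supporting_hyperplane C z H2 -> H1 = H2.

Definition normal_to (v : vec) (H : set vec) : Prop :=
  forall x y, H x -> H y -> dotv v (x - y) = 0.

Definition segment (a b : vec) : set vec :=
  [set (1 - t) *: a + t *: b | t in [set t : R | 0 <= t <= 1]].

(* closed polygonal curve (q_1,...,q_m), indices mod m (via ordS / ord_pred) *)
Definition closed_polygonal (m : nat) (q : 'I_m -> vec) : Prop :=
  (2 <= m)%N /\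
  forall j : 'I_m, q j != q (ordS j) /\ ~ segment (q (ord_pred j)) (q (ordS j)) (q j).

Definition minkowski_billiard (K T : set vec) (m : nat) (q : 'I_m -> vec)
    (H : 'I_m -> set vec) (nK : 'I_m -> vec) : Prop :=
  [/\ closed_polygonal q,
      forall j, bd K (q j),
      forall j, supporting_hyperplane K (q j) (H j),
      forall j, [/\ normal_cone K (q j) (nK j), dotv (nK j) (nK j) = 1
                   & normal_to (nK j) (H j)]
    & exists (p : 'I_m -> vec) (mu : 'I_m -> R),
        forall j, [/\ bd T (p j), 0 <= mu j,
                     normal_cone T (p j) (q (ordS j) - q j)
                   & p (ordS j) - p j = - (mu (ordS j) *: nK (ordS j))]].

Definition cone_span (m : nat) (v : 'I_m -> vec) : set vec :=
  [set x | exists lam : 'I_m -> R, (forall j, 0 <= lam j) /\ x = \sum_j lam j *: v j].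

Definition in_conv_hull (m : nat) (v : 'I_m -> vec) (x : vec) : Prop :=
  exists lam : 'I_m -> R, [/\ forall j, 0 <= lam j, \sum_j lam j = 1
                            & x = \sum_j lam j *: v j].

Definition linear_subspace (U : set vec) : Prop :=
  U 0 /\ forall (a : R) x y, U x -> U y -> U (a *: x + y).

(* dim U <= d : U is the row space of some d x n matrix *)
Definition dim_le (U : set vec) (d : nat) : Prop :=
  exists B : 'M[R]_(d, n), U = [set x | (x <= B)%MS].

End Defs.

From HB Require Import structures.
From mathcomp Require Import all_boot all_order all_algebra.
From mathcomp Require Import all_classical all_reals all_analysis.
From mathcomp Require Import ring lra.
Set Implicit Arguments. Unset Strict Implicit.
Import Order.TTheory GRing.Theory Num.Theory.
Import numFieldNormedType.Exports.
Local Open Scope classical_set_scope.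
Local Open Scope ring_scope.

(** Telescoping the billiard equations [p_{j+1} - p_j = -mu_{j+1} n_K(q_{j+1})]
   around the closed curve gives [sum_j mu_j n_K(q_j) = 0], so [0] is a convex
   combination of the normals as soon as some [mu_j] is positive.  If all
   [mu_j] vanished, [p] would be constant and
   [sum_j <q_{j+1} - q_j, p_j> = 0], whereas every term is positive because
   [q_{j+1} - q_j] is a nonzero outer normal of [T] at [p_j] and [0] is interior
   to [T].  If [T] is smooth, [mu_k = 0] would make the two edges at [q_k] outer
   normals of [T] at the same point, hence positively proportional, so that
   [q_k] would lie on the segment [[q_{k-1}, q_{k+1}]]; thus all [mu_j > 0].
   A balanced family with positive weights generates its linear span as a
   cone, and the balance relation makes one normal redundant, so the span has
   dimension at most [m - 1]. *)

Section InnerProduct.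
Variables (R : realType) (n : nat).
Local Notation vec := 'rV[R]_n.
Implicit Types u v w : vec.

Lemma dotvC u v : dotv u v = dotv v u.
Proof. by apply: eq_bigr => i _; rewrite mulrC. Qed.

Lemma dotvDl u w v : dotv (u + w) v = dotv u v + dotv w v.
Proof. by rewrite /dotv -big_split; apply: eq_bigr => i _; rewrite !mxE mulrDl. Qed.

Lemma dotvZl a u v : dotv (a *: u) v = a * dotv u v.
Proof. by rewrite /dotv mulr_sumr; apply: eq_bigr => i _; rewrite !mxE mulrA. Qed.

Lemma dotvNl u v : dotv (- u) v = - dotv u v.
Proof. by rewrite -scaleN1r dotvZl mulN1r. Qed.

Lemma dotvBl u w v : dotv (u - w) v = dotv u v - dotv w v.
Proof. by rewrite dotvDl dotvNl. Qed.

Lemma dotvDr u w v : dotv v (u + w) = dotv v u + dotv v w.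
Proof. by rewrite !(dotvC v) dotvDl. Qed.

Lemma dotvZr a u v : dotv v (a *: u) = a * dotv v u.
Proof. by rewrite !(dotvC v) dotvZl. Qed.

Lemma dotvBr u w v : dotv v (u - w) = dotv v u - dotv v w.
Proof. by rewrite !(dotvC v) dotvBl. Qed.

Lemma dotvv_eq0 u : (dotv u u == 0) = (u == 0).
Proof.
apply/eqP/eqP => [|->]; last by rewrite /dotv big1 // => i _; rewrite mxE mul0r.
move=> /eqP; rewrite psumr_eq0 => [/allP u0|i _]; last by rewrite -expr2 sqr_ge0.
apply/rowP => i; rewrite mxE.
by apply/eqP; have := u0 i (mem_index_enum i); rewrite /= -expr2 sqrf_eq0.
Qed.

Lemma dotvv_gt0 u : u != 0 -> 0 < dotv u u.
Proof.
move=> u0; rewrite lt_neqAle eq_sym dotvv_eq0 u0 /=.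
by apply: sumr_ge0 => i _; rewrite -expr2 sqr_ge0.
Qed.

(* Testing against [u - (<v,u>/<v,v>) v], which lies in the direction of the
   first hyperplane, shows that [w] vanishes on the orthogonal of [v]. *)
Lemma hyperplane_sub_proportional v w (p : vec) : v != 0 ->
  (forall x, dotv v x = dotv v p -> dotv w x = dotv w p) ->
  w = (dotv w v / dotv v v) *: v.
Proof.
move=> v0 sub; have vv0 := dotvv_gt0 v0.
have w_lin u : dotv w u = dotv w v / dotv v v * dotv v u.
  have := sub (p + (u - (dotv v u / dotv v v) *: v)).
  rewrite dotvDr dotvBr dotvZr divfK ?gt_eqF // subrr addr0 => /(_ erefl).
  rewrite dotvDr dotvBr dotvZr => /eqP.
  rewrite -subr_eq0 addrAC subrr add0r subr_eq0 => /eqP ->.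
  by rewrite (dotvC w v); field; rewrite gt_eqF.
apply/eqP; rewrite -subr_eq0 -dotvv_eq0.
by rewrite dotvBl dotvZl -w_lin subrr.
Qed.

End InnerProduct.

Section NormalCone.
Variables (R : realType) (n : nat) (T : set 'rV[R]_n).
Local Notation vec := 'rV[R]_n.
Implicit Types p v w : vec.

Lemma normal_cone_supporting_hyperplane p v : normal_cone T p v -> v != 0 ->
  supporting_hyperplane T p [set x | dotv v x = dotv v p].
Proof.
move=> Nv v0; exists v, (dotv v p); split => // y Ty.
by have := Nv _ Ty; rewrite dotvBr subr_le0.
Qed.

Hypothesis T0 : interior T 0.

(* Since [0] is interior, [t v] lies in [T] for some [t > 0], and then
   [<v, t v - p> <= 0]. *)
Lemma normal_cone_dot_gt0 p v : normal_cone T p v -> v != 0 -> 0 < dotv v p.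
Proof.
move=> Nv v0.
have [t [t_gt0 Ttv]] : exists t : R, 0 < t /\ T (t *: v).
  have tv_cvg : (fun t : R => t *: v) @ nbhs (0 : R) --> (0 : R) *: v.
    by apply: cvgZr_tmp; exact: cvg_id.
  rewrite scale0r in tv_cvg.
  have /nbhs_ballP [e /= e_gt0 ball_T] := tv_cvg _ T0.
  exists (e / 2); split; first by rewrite divr_gt0.
  apply: ball_T; rewrite /ball /= sub0r normrN ger0_norm ?divr_ge0 ?ltW //.
  by rewrite ltr_pdivrMr // ltr_pMr // ltr1n.
have := Nv _ Ttv; rewrite dotvBr dotvZr subr_le0; apply: lt_le_trans.
by rewrite mulr_gt0 // dotvv_gt0.
Qed.

Lemma smooth_normal_cone_ray p v w : smooth T -> bd T p ->
  normal_cone T p v -> normal_cone T p w -> v != 0 -> w != 0 ->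
  exists2 c : R, 0 < c & w = c *: v.
Proof.
move=> smoothT bdp Nv Nw v0 w0.
have sameH := smoothT p bdp _ _ (normal_cone_supporting_hyperplane Nv v0)
                                (normal_cone_supporting_hyperplane Nw w0).
have w_v : w = (dotv w v / dotv v v) *: v.
  apply: (hyperplane_sub_proportional (p := p) v0) => x vx.
  by have : [set x | dotv v x = dotv v p] x by []; rewrite sameH.
exists (dotv w v / dotv v v) => //.
have := normal_cone_dot_gt0 Nw w0; rewrite {1}w_v dotvZl.
by rewrite pmulr_lgt0 // normal_cone_dot_gt0.
Qed.

End NormalCone.

Lemma segment_of_backward_ray (R : realType) (n : nat) (a b x : 'rV[R]_n) (c : R) :
  0 < c -> b - x = c *: (x - a) -> segment a b x.
Proof.
move=> c_gt0 bx; exists (1 / (1 + c)).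
  apply/andP; split; first by rewrite divr_ge0 // ltW // addr_gt0.
  by rewrite ler_pdivrMr ?addr_gt0 // mul1r lerDl ltW.
have -> : b = x + c *: (x - a) by rewrite -bx addrC subrK.
apply/rowP => i; rewrite !mxE; field.
by rewrite gt_eqF // addr_gt0.
Qed.

Lemma sumr_ordS (V : zmodType) (m : nat) (F : 'I_m -> V) :
  \sum_j F (ordS j) = \sum_j F j.
Proof. by rewrite [RHS](reindex_inj (@ordS_inj _)). Qed.

Lemma telescope_ordS (V : zmodType) (m : nat) (F : 'I_m -> V) :
  \sum_j (F (ordS j) - F j) = 0.
Proof. by rewrite sumrB sumr_ordS subrr. Qed.

Section BalancedFamily.
Variables (R : realType) (n m : nat) (v : 'I_m -> 'rV[R]_n) (mu : 'I_m -> R).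
Hypothesis balanced : \sum_j mu j *: v j = 0.

Lemma in_conv_hull0_balanced : (forall j, 0 <= mu j) -> 0 < \sum_j mu j ->
  in_conv_hull v 0.
Proof.
move=> mu_ge0 S_gt0; exists (fun j => mu j / \sum_i mu i); split.
- by move=> j; rewrite divr_ge0 // ltW.
- by rewrite -mulr_suml divff // gt_eqF.
- by under eq_bigr do rewrite mulrC -scalerA; rewrite -scaler_sumr balanced scaler0.
Qed.

Hypothesis mu_gt0 : forall j, 0 < mu j.

(* Add [M] times the balance relation, with [M] large enough to make every
   coefficient nonnegative. *)
Lemma cone_span_balanced (g : 'I_m -> R) : cone_span v (\sum_j g j *: v j).
Proof.
pose M := \sum_j `|g j| / mu j.
exists (fun j => M * mu j + g j); split.
  move=> j; have gj_le : `|g j| <= M * mu j.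
    rewrite -ler_pdivrMr // /M (bigD1 j) //= lerDl.
    by apply: sumr_ge0 => i _; rewrite divr_ge0 // ltW.
  have := ler_norm (- g j); rewrite normrN; lra.
under [RHS]eq_bigr do rewrite scalerDl -scalerA.
by rewrite big_split /= -scaler_sumr balanced scaler0 add0r.
Qed.

Lemma linear_subspace_cone_span_balanced : linear_subspace (cone_span v).
Proof.
split; first by exists (fun=> 0); split => //; rewrite big1 // => j _; rewrite scale0r.
move=> a _ _ [l [_ ->]] [l' [_ ->]].
rewrite scaler_sumr -big_split /=.
under eq_bigr do rewrite scalerA -scalerDl.
exact: cone_span_balanced.
Qed.

End BalancedFamily.

(* The last vector is a combination of the others, so the first [m - 1]
   vectors already span the cone. *)
Lemma dim_le_cone_span_balanced (R : realType) (n m : nat)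
    (v : 'I_m -> 'rV[R]_n) (mu : 'I_m -> R) : (0 < m)%N ->
  \sum_j mu j *: v j = 0 -> (forall j, 0 < mu j) -> dim_le (cone_span v) m.-1.
Proof.
case: m v mu => [//|m] v mu _ balanced mu_gt0.
pose B := \matrix_(i < m, k < n) v (widen_ord (leqnSn m) i) 0 k.
have rowB i : row i B = v (widen_ord (leqnSn m) i).
  by apply/rowP => k; rewrite !mxE.
exists B; apply/seteqP; split => x /=.
  move=> [l [_ ->]]; apply/submxP.
  pose c := l ord_max / mu ord_max.
  exists (\row_i (l (widen_ord (leqnSn m) i) - c * mu (widen_ord (leqnSn m) i))).
  rewrite mulmx_sum_row.
  under [RHS]eq_bigr do rewrite rowB mxE scalerBl -scalerA.
  rewrite sumrB -scaler_sumr.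
  move: balanced; rewrite big_ord_recr /= => /eqP; rewrite addr_eq0 => /eqP ->.
  by rewrite [LHS]big_ord_recr /= scalerN opprK scalerA /c divfK // gt_eqF.
move=> /submxP [D ->]; rewrite mulmx_sum_row.
have -> : \sum_i D 0 i *: row i B
    = \sum_(j < m.+1) oapp (D 0) 0 (unlift ord_max j) *: v j.
  rewrite [RHS]big_ord_recr /= unlift_none scale0r addr0; apply: eq_bigr => i _.
  have wi : widen_ord (leqnSn m) i = lift ord_max i.
    by apply: val_inj; rewrite /= /bump leqNgt ltn_ord.
  by rewrite rowB wi liftK.
exact: (cone_span_balanced balanced mu_gt0 (fun j => oapp (D 0) 0 (unlift ord_max j))).
Qed.

Section BilliardWeights.
Variables (R : realType) (n m : nat) (T : set 'rV[R]_n).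
Variables (q p nK : 'I_m -> 'rV[R]_n) (mu : 'I_m -> R).
Hypothesis T0 : interior T 0.
Hypothesis q_edge : forall j, q (ordS j) - q j != 0.
Hypothesis p_normal : forall j, normal_cone T (p j) (q (ordS j) - q j).
Hypothesis p_step : forall j, p (ordS j) - p j = - (mu (ordS j) *: nK (ordS j)).
Hypothesis mu_ge0 : forall j, 0 <= mu j.

Lemma billiard_balanced : \sum_j mu j *: nK j = 0.
Proof.
apply/eqP; rewrite -oppr_eq0 -sumrN -(sumr_ordS (fun j => - (mu j *: nK j))).
by under eq_bigr do rewrite -p_step; rewrite telescope_ordS.
Qed.

Lemma billiard_weight_sum_gt0 : (0 < m)%N -> 0 < \sum_j mu j.
Proof.
move=> m_gt0; rewrite lt_neqAle sumr_ge0 // andbT eq_sym.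
apply/negP => /eqP /(psumr_eq0P (fun j _ => mu_ge0 j)) mu0.
have p_const j : p (ordS j) = p j.
  by apply/eqP; rewrite -subr_eq0 p_step mu0 ?scale0r ?oppr0.
pose f j := dotv (q (ordS j) - q j) (p j).
have f_gt0 j : 0 < f j := normal_cone_dot_gt0 T0 (p_normal j) (q_edge j).
have /(psumr_eq0P (fun j _ => ltW (f_gt0 j))) f0 : \sum_j f j = 0.
  under eq_bigr => j _ do rewrite /f dotvBl -{1}p_const.
  exact: (telescope_ordS (fun j => dotv (q j) (p j))).
by have := f_gt0 (Ordinal m_gt0); rewrite f0 ?ltxx.
Qed.

Lemma billiard_weights_gt0 : smooth T -> (forall j, bd T (p j)) ->
  (forall j, ~ segment (q (ord_pred j)) (q (ordS j)) (q j)) ->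
  forall k, 0 < mu k.
Proof.
move=> smoothT bdp no_segment k.
rewrite lt_neqAle mu_ge0 andbT eq_sym; apply/negP => /eqP mu_k0.
pose j := ord_pred k.
have jk : ordS j = k by rewrite ord_predK.
have pk : p k = p j.
  by apply/eqP; rewrite -subr_eq0 -{1}jk p_step jk mu_k0 scale0r oppr0.
have Nj := p_normal j; have Nk := p_normal k.
rewrite jk in Nj; rewrite pk in Nk.
have edge_j : q k - q j != 0 by have := q_edge j; rewrite jk.
have [c c_gt0 edges] := smooth_normal_cone_ray T0 smoothT (bdp j) Nj Nk
  edge_j (q_edge k).
exact/(no_segment k)/(segment_of_backward_ray c_gt0 edges).
Qed.

End BilliardWeights.

Theorem proposition3p7 (R : realType) (n : nat) (K T : set 'rV[R]_n) (m : nat)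
    (q : 'I_m -> 'rV[R]_n) (H : 'I_m -> set 'rV[R]_n) (nK : 'I_m -> 'rV[R]_n) :
  convex_body K -> convex_body T -> minkowski_billiard K T q H nK ->
  in_conv_hull nK 0 /\
  (smooth T -> linear_subspace (cone_span nK) /\ dim_le (cone_span nK) m.-1).
Proof.
move=> _ [_ _ T0] [[m_gt1 polygonal] _ _ _ [p [mu trajectory]]].
have m_gt0 : (0 < m)%N by apply: ltn_trans m_gt1.
have q_edge j : q (ordS j) - q j != 0.
  by rewrite subr_eq0 eq_sym; case: (polygonal j).
have p_normal j : normal_cone T (p j) (q (ordS j) - q j).
  by case: (trajectory j).
have p_step j : p (ordS j) - p j = - (mu (ordS j) *: nK (ordS j)).
  by case: (trajectory j).
have mu_ge0 j : 0 <= mu j by case: (trajectory j).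
have balanced := billiard_balanced p_step.
split.
  exact: (in_conv_hull0_balanced balanced mu_ge0
           (billiard_weight_sum_gt0 T0 q_edge p_normal p_step mu_ge0 m_gt0)).
move=> smoothT.
have p_bd j : bd T (p j) by case: (trajectory j).
have no_segment j : ~ segment (q (ord_pred j)) (q (ordS j)) (q j).
  by case: (polygonal j).
have mu_gt0 := billiard_weights_gt0 T0 q_edge p_normal p_step mu_ge0 smoothT
  p_bd no_segment.
split; first exact: (linear_subspace_cone_span_balanced balanced mu_gt0).
exact: (dim_le_cone_span_balanced m_gt0 balanced mu_gt0).
Qed.
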